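(* Let $\chi=(\chi_u,\ (\chi^k_\alpha)_{k\in\mathbb Z_+,\alpha\in N},\ \chi_{p,0},\ \chi_{p,1})$ be a family of elements of $\mathcal A(\mathbf{CPE})$ with only finitely many nonzero members. Then $\chi$ satisfies the system $$\begin{aligned} &D_1\chi_u+2D_\alpha(u^\alpha_{(1)}\chi_{p,1})=0,\\ &D_1\chi^k_\alpha+\delta^k_0D_\alpha\chi_u+\chi^{k-1}_\alpha+2\big(\delta^k_0D_\alpha(u^\beta_{(\beta)}\chi_{p,1})-\delta^k_1u^1_{(\alpha)}\chi_{p,1}+\delta^k_0D_\beta(u^\beta_{(\alpha)}\chi_{p,1})\big)=0\quad(k\in\mathbb Z_+,\ \alpha\in N,\ \chi^{-1}_\alpha:=0),\\ &D_1\chi_{p,0}-\Delta'\chi_{p,1}=0,\\ &D_1\chi_{p,1}+\chi_{p,0}=0 \end{aligned}$$ if and only if $$\chi^0_\alpha=2u^1_{(\alpha)}\chi_{p,1},\qquad \chi^k_\alpha=0\ (k\ge1),\qquad \chi_{p,0}=-D_1\chi_{p,1}\qquad(\alpha\in N),$$ where $\chi_{p,1}$ and $\chi_u$ satisfy $$\Delta\chi_{p,1}=0,\qquad \big(u^\mu_{(1)}D_\mu D_\alpha-u^\mu_{(\alpha)}D_\mu D_1\big)\chi_{p,1}=0\quad(\alpha\in N),$$ $$D_1\chi_u=-2D_\alpha(u^\alpha_{(1)}\chi_{p,1}),\qquad D_\alpha\chi_u=-2\big(u^\mu_{(\alpha)}D_\mu\chi_{p,1}+D_\alpha(u^\beta_{(\beta)}\chi_{p,1})\big)\quad(\alpha\in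 N).$$
   Context: Fix an integer $m\ge 2$, $M=\{1,\dots,m\}$, $N=\{2,\dots,m\}$. Indices $\lambda,\mu,\nu$ range over $M$, indices $\alpha,\beta$ over $N$; repeated upper/lower indices are summed; $\delta^k_l$ is the Kronecker delta. $\mathbb I=\mathbb Z_+^m$ is the set of multi-indices $\mathrm i=(i^1,\dots,i^m)$; $\mathrm i+(\mu)$ is $\mathrm i$ with its $\mu$-th entry increased by $1$, $(\mu)=0+(\mu)$, $2(\mu)=(\mu)+(\mu)$; $\mathbb I_0=\{\mathrm i: i^1=0\}$, $\mathbb I_1=\{\mathrm i: i^1\in\{0,1\}\}$. The space $\mathbf B$ has coordinates $x^\mu$, $u^\mu_{\mathrm i}$, $p_{\mathrm i}$ ($\mathrm i\in\mathbb I$); $\mathcal A(\mathbf B)$ is the algebra of smooth real functions depending on finitely many coordinates; total derivatives $D_\mu=\partial_{x^\mu}+u^\lambda_{\mathrm i+(\mu)}\partial_{u^\lambda_{\mathrm i}}+p_{\mathrm i+(\mu)}\partial_{p_{\mathrm i}}$ (commuting), $D_{\mathrm i}=D_1^{i^1}\cdots D_m^{i^m}$, $\Delta=\sum_{\mu\in M}D_\mu^2$, $\Delta'=\sum_{\alpha\in N}D_\alpha^2$. Let $CE_{\mathrm i}=u^\mu_{\mathrm i+(\mu)}$ and $PE_{\mathrm i}=\Delta p_{\mathrm i}+D_{\mathrm i}(u^\lambda_{(\mu)}u^\mu_{(\lambda)})$, where $\Delta p_{\mathrm i}=\sum_\mu p_{\mathrm i+2(\mu)}$. Let $\mathcal J\subset\mathcal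 A(\mathbf B)$ be the ideal generated by all $CE_{\mathrm i}$ and $PE_{\mathrm i}$, $\mathrm i\in\mathbb I$ (stable under the $D_\mu$), and $\mathcal A(\mathbf{CPE})=\mathcal A(\mathbf B)/\mathcal J$ with the induced commuting derivations $D_\mu$. Concretely, $\mathcal A(\mathbf{CPE})$ consists of smooth functions of finitely many of the global coordinates $x^\mu$, $u^1_{\mathrm i}$ ($\mathrm i\in\mathbb I_0$), $u^\alpha_{\mathrm i}$ ($\alpha\in N$, $\mathrm i\in\mathbb I$), $p_{\mathrm i}$ ($\mathrm i\in\mathbb I_1$), where the remaining variables are expressed recursively by $u^1_{\mathrm k}=-u^\beta_{\mathrm k-(1)+(\beta)}$ ($k^1\ge1$) and $p_{\mathrm k}=-D_{\mathrm k-2(1)}\Phi$ ($k^1\ge2$), with $\Phi=\Delta'p+u^\lambda_{(\mu)}u^\mu_{(\lambda)}$ in which $u^1_{(1)}$ is replaced by $-u^\alpha_{(\alpha)}$; the derivations $D_\mu$ act by the formula above followed by these substitutions. (In the paper the components $\chi_u,\chi^k_\alpha,\chi_{p,0},\chi_{p,1}$ are denoted $\chi^0_1,\chi^{i^1}_\alpha,\chi^0,\chi^1$, and the system is written $(D_1+\mathrm f^* )\chi=0$.) *)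

From Stdlib Require Import Reals ClassicalEpsilon.
From Coquelicot Require Import Coquelicot.
From mathcomp Require Import all_boot.

Set Implicit Arguments.
Unset Strict Implicit.
Unset Printing Implicit Defensive.
Local Open Scope R_scope.

Section CPE.
(* m = n.+2, so m >= 2.  The paper's index 1 is ord0; N = {a | a != ord0}. *)
Variable n : nat.
Local Notation m := n.+2.

Definition mi := {ffun 'I_m -> nat}.
Definition mi0 : mi := [ffun _ => 0%N].
Definition addmi (i : mi) (mu : 'I_m) : mi := [ffun j => (i j + (j == mu))%N].
Definition unitmi (mu : 'I_m) : mi := addmi mi0 mu.

(* coordinates of B:  x^mu | u^mu_i | p_i *)
Definition coord : eqType := (('I_m + ('I_m * mi)) + mi)%type.
Definition Xc (mu : 'I_m) : coord := inl (inl mu).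
Definition Uc (la : 'I_m) (i : mi) : coord := inl (inr (la, i)).
Definition Pc (i : mi) : coord := inr i.

Definition pt := coord -> R.
Definition F := pt -> R.

Definition upd (y : pt) (c : coord) (t : R) : pt :=
  fun c' => if c' == c then t else y c'.

Definition pd (c : coord) (f : F) : F :=
  fun y => Derive (fun t => f (upd y c t)) (y c).
Definition ipd (cs : seq coord) (f : F) : F := foldr pd f cs.

Definition dep_on (f : F) (S : seq coord) : Prop :=
  forall y y' : pt, (forall c, c \in S -> y c = y' c) -> f y = f y'.

(* continuity for the product topology on coord -> R *)
Definition pcont (f : F) : Prop :=
  forall (y : pt) (eps : R), (0 < eps) ->
    exists (S : seq coord) (delta : R), (0 < delta) /\
      forall y' : pt, (forall c, c \in S -> (Rabs (y' c - y c) < delta)) ->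
        (Rabs (f y' - f y) < eps).

Definition smooth (f : F) : Prop :=
  (forall (cs : seq coord) (c : coord) (y : pt),
      ex_derive (fun t => ipd cs f (upd y c t)) (y c)) /\
  (forall cs : seq coord, pcont (ipd cs f)).

Definition AB (f : F) : Prop := (exists S, dep_on f S) /\ smooth f.

Definition supp (f : F) : seq coord :=
  epsilon (inhabits [::]) (fun S => dep_on f S).

Definition isjet (c : coord) : bool :=
  match c with inl (inl _) => false | _ => true end.
Definition shift (mu : 'I_m) (c : coord) : coord :=
  match c with
  | inl (inl _) => c
  | inl (inr (la, i)) => Uc la (addmi i mu)
  | inr i => Pc (addmi i mu)
  end.

(* total derivative D_mu = d/dx^mu + u^la_{i+(mu)} d/du^la_i + p_{i+(mu)} d/dp_i *)
Definition D (mu : 'I_m) (f : F) : F :=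
  fun y => (pd (Xc mu) f y +
    foldr Rplus 0
      (map (fun c => y (shift mu c) * pd c f y)
           (filter isjet (undup (supp f))))).

Definition Di (i : mi) (f : F) : F :=
  foldr (fun j g => iter (i j) (D j) g) f (enum 'I_m).

Definition fzero : F := fun _ => 0.
Definition fadd (f g : F) : F := fun y => (f y + g y).
Definition fmul (f g : F) : F := fun y => (f y * g y).
Definition fopp (f : F) : F := fun y => (- f y).
Definition fscal (a : R) (f : F) : F := fun y => (a * f y).
Definition fsub (f g : F) : F := fun y => (f y - g y).
Definition fsumM (h : 'I_m -> F) : F :=
  fun y => foldr (fun j acc => (h j y + acc)) 0 (enum 'I_m).
Definition fsumN (h : 'I_m -> F) : F :=
  fun y => foldr (fun j acc => (h j y + acc)) 0
                 (filter (fun j => j != ord0) (enum 'I_m)).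

Definition uf (la : 'I_m) (i : mi) : F := fun y => y (Uc la i).
Definition pf (i : mi) : F := fun y => y (Pc i).

Definition lap (f : F) : F := fsumM (fun mu => D mu (D mu f)).
Definition lap' (f : F) : F := fsumN (fun a => D a (D a f)).

Definition CE (i : mi) : F := fsumM (fun mu => uf mu (addmi i mu)).
Definition PE (i : mi) : F :=
  fadd (fsumM (fun mu => pf (addmi (addmi i mu) mu)))
       (Di i (fsumM (fun la => fsumM (fun mu =>
                fmul (uf la (unitmi mu)) (uf mu (unitmi la)))))).
Definition gen (b : bool) (i : mi) : F := if b then CE i else PE i.

Definition inJ (f : F) : Prop :=
  exists l : list (F * (bool * mi)),
    (forall q, List.In q l -> AB q.1) /\
    forall y, f y = List.fold_right
                      (fun q acc => (q.1 y * gen q.2.1 q.2.2 y + acc)) 0 l.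

(* equality in A(CPE) = A(B)/J *)
Definition eqJ (f g : F) : Prop := inJ (fsub f g).

End CPE.

(* Modulo J the total derivatives D_mu commute (Schwarz's theorem plus the
   symmetry of the jet shifts), obey the Leibniz rule, and preserve J, since
   D_mu CE_i = CE_(i+(mu)) and D_mu PE_i = PE_(i+(mu)).  In the system, the
   equation for chi^(k+1) reads D_1 chi^(k+1) + chi^k = 0 for k >= 1, so
   descending induction from the finitely many nonzero chi^k kills every
   chi^k with k >= 1; the equation for chi^1 then gives chi^0, and the
   chi_p equations give chi_(p,0) = -D_1 chi_(p,1) and Delta chi_(p,1) = 0.
   Substituting chi^0 into the k = 0 equation and discarding
   CE_((alpha)) yields D_alpha chi_u, and the compatibility conditions on
   chi_(p,1) are D_alpha (D_1 chi_u) - D_1 (D_alpha chi_u) = 0 rewritten with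
   the two formulas for the derivatives of chi_u, up to CE_0 and CE_((alpha)).
   Each of these steps is reversible. *)

From HB Require Import structures.
From Stdlib Require Import Reals Lra Psatz ClassicalEpsilon FunctionalExtensionality.
From Coquelicot Require Import Coquelicot.
From mathcomp Require Import all_boot.
Set Implicit Arguments.
Unset Strict Implicit.
Unset Printing Implicit Defensive.
Local Open Scope R_scope.

Lemma Rplus_assoc_law : associative Rplus.
Proof. by move=> x y z; ring. Qed.
HB.instance Definition _ :=
  Monoid.isComLaw.Build R 0 Rplus Rplus_assoc_law Rplus_comm Rplus_0_l.
HB.instance Definition _ := Monoid.isMulLaw.Build R 0 Rmult Rmult_0_l Rmult_0_r.
HB.instance Definition _ :=
  Monoid.isAddLaw.Build R Rmult Rplus Rmult_plus_distr_r Rmult_plus_distr_l.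

Lemma foldr_Rplus_big (A : Type) (s : seq A) (G : A -> R) :
  foldr (fun c acc => G c + acc) 0 s = \big[Rplus/0]_(c <- s) G c.
Proof. by elim: s => [|a s IH] /=; rewrite ?big_nil ?big_cons ?IH. Qed.

Lemma foldr_map_Rplus_big (A : Type) (s : seq A) (G : A -> R) :
  foldr Rplus 0 (map G s) = \big[Rplus/0]_(c <- s) G c.
Proof. by elim: s => [|a s IH] /=; rewrite ?big_nil ?big_cons ?IH. Qed.

Lemma big_Rminus (I : Type) (r : seq I) (G1 G2 : I -> R) :
  \big[Rplus/0]_(j <- r) (G1 j - G2 j) =
  \big[Rplus/0]_(j <- r) G1 j - \big[Rplus/0]_(j <- r) G2 j.
Proof. by elim: r => [|x r IH]; rewrite ?big_nil ?big_cons ?IH; ring. Qed.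

Lemma big_filter_vanish (I : eqType) (s : seq I) (P : pred I) (G : I -> R) :
  (forall c, c \in s -> ~~ P c -> G c = 0) ->
  \big[Rplus/0]_(c <- s) G c = \big[Rplus/0]_(c <- filter P s) G c.
Proof.
move=> H; rewrite big_filter (bigID P) /= [X in _ + X]big1_seq ?Rplus_0_r //.
by move=> c /andP [nP cs]; apply: H.
Qed.

Lemma big_uniq_subset (I : eqType) (L L' : seq I) (G : I -> R) : uniq L -> uniq L' ->
  {subset L <= L'} -> (forall c, c \in L' -> c \notin L -> G c = 0) ->
  \big[Rplus/0]_(c <- L') G c = \big[Rplus/0]_(c <- L) G c.
Proof.
move=> uL uL' sub H; rewrite (big_filter_vanish (P := mem L)) //.
apply/perm_big/uniq_perm; rewrite ?filter_uniq // => c.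
by rewrite mem_filter andb_idr //; apply: sub.
Qed.

Lemma big_delta (I : eqType) (s : seq I) (e : I) (G : I -> R) : uniq s -> e \in s ->
  \big[Rplus/0]_(c <- s) ((if e == c then 1 else 0) * G c) = G e.
Proof.
move=> us es; rewrite (bigD1_seq e) //= eqxx big1 => [|c]; first ring.
by rewrite eq_sym => /negbTE ->; ring.
Qed.

Lemma ex_derive_big (A : Type) (l : seq A) (G : A -> R -> R) x :
  (forall q, List.In q l -> ex_derive (G q) x) ->
  ex_derive (fun t => \big[Rplus/0]_(q <- l) G q t) x.
Proof.
elim: l => [|q l IH] H.
  apply: (ex_derive_ext (fun _ => 0)); last exact: ex_derive_const.
  by move=> t; rewrite big_nil.
apply: (ex_derive_ext (fun t => G q t + \big[Rplus/0]_(q0 <- l) G q0 t)).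
  by move=> t; rewrite big_cons.
apply: ex_derive_plus; first by apply: H; left.
by apply: IH => q0 Hq0; apply: H; right.
Qed.

Lemma Derive_big (A : Type) (l : seq A) (G : A -> R -> R) x :
  (forall q, List.In q l -> ex_derive (G q) x) ->
  Derive (fun t => \big[Rplus/0]_(q <- l) G q t) x =
  \big[Rplus/0]_(q <- l) Derive (G q) x.
Proof.
elim: l => [|q l IH] H.
  by rewrite big_nil (Derive_ext _ (fun _ => 0)) ?Derive_const // => t; rewrite big_nil.
have Hl q0 : List.In q0 l -> ex_derive (G q0) x by move=> Hq0; apply: H; right.
rewrite big_cons (Derive_ext _ (fun t => G q t + \big[Rplus/0]_(q0 <- l) G q0 t)).
  by rewrite Derive_plus ?IH //; [apply: H; left | exact: ex_derive_big].
by move=> t; rewrite big_cons.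
Qed.

Section Smooth.
Variable n : nat.
Local Notation F := (F n).
Local Notation pt := (pt n).
Local Notation coord := (coord n).

Lemma upd_eq (y : pt) c t : upd y c t c = t.
Proof. by rewrite /upd eqxx. Qed.

Lemma upd_neq (y : pt) c c' t : c' != c -> upd y c t c' = y c'.
Proof. by rewrite /upd => /negbTE ->. Qed.

Lemma upd_id (y : pt) c : upd y c (y c) = y.
Proof. by apply: functional_extensionality => c'; rewrite /upd; case: eqP => [->|]. Qed.

Lemma upd_upd (y : pt) c s t : upd (upd y c s) c t = upd y c t.
Proof. by apply: functional_extensionality => c'; rewrite /upd; case: eqP. Qed.

Lemma upd_comm (y : pt) c c' s t : c != c' ->
  upd (upd y c s) c' t = upd (upd y c' t) c s.
Proof.
move=> ne; apply: functional_extensionality => e; rewrite /upd.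
by case: (eqVneq e c') => [->|//]; rewrite eq_sym (negbTE ne).
Qed.

Lemma pd_dep_notin (f : F) S c y : dep_on f S -> c \notin S -> pd c f y = 0.
Proof.
move=> Hf Hc; rewrite /pd (Derive_ext _ (fun _ => f y)) ?Derive_const // => t.
apply: Hf => c' Hc'; rewrite upd_neq //.
by apply: contraNneq Hc => <-.
Qed.

Lemma dep_on_pd (f : F) S c : dep_on f S -> dep_on (pd c f) S.
Proof.
move=> Hf y y' Hyy'; case Hc: (c \in S); last by rewrite !(pd_dep_notin _ Hf) ?Hc.
rewrite /pd (Hyy' c Hc); congr Derive; apply: functional_extensionality => t.
by apply: Hf => c' Hc'; rewrite /upd; case: eqP => // _; apply: Hyy'.
Qed.

Lemma dep_on_sub (f : F) S S' : dep_on f S -> {subset S <= S'} -> dep_on f S'.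
Proof. by move=> Hf sub y y' H; apply: Hf => c Hc; apply/H/sub. Qed.

Definition ex_pd (g : F) := forall c (y : pt), ex_derive (fun t => g (upd y c t)) (y c).

Lemma ex_pd_at (g : F) c (y : pt) t0 : ex_pd g -> ex_derive (fun t => g (upd y c t)) t0.
Proof.
move=> H; have := H c (upd y c t0); rewrite upd_eq.
by apply: ex_derive_ext => t; rewrite upd_upd.
Qed.

Lemma pd_plus (f g : F) c (y : pt) : ex_pd f -> ex_pd g ->
  pd c (fun y => f y + g y) y = pd c f y + pd c g y.
Proof. by move=> Hf Hg; rewrite /pd Derive_plus //; apply: ex_pd_at. Qed.

Lemma pd_mult (f g : F) c (y : pt) : ex_pd f -> ex_pd g ->
  pd c (fun y => f y * g y) y = pd c f y * g y + f y * pd c g y.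
Proof. by move=> Hf Hg; rewrite /pd Derive_mult ?upd_id //; apply: ex_pd_at. Qed.

Lemma pd_big (A : Type) (l : seq A) (G : A -> F) c (y : pt) :
  (forall q, List.In q l -> ex_pd (G q)) ->
  pd c (fun y => \big[Rplus/0]_(q <- l) G q y) y = \big[Rplus/0]_(q <- l) pd c (G q) y.
Proof.
by move=> H; rewrite /pd (Derive_big (G := fun q t => G q (upd y c t))) // => q /H /ex_pd_at.
Qed.

Lemma pd_const (a : R) c : pd c (fun _ : pt => a) = fun _ => 0.
Proof. by apply: functional_extensionality => y; rewrite /pd Derive_const. Qed.

Lemma pd_coord (e c : coord) :
  pd c (fun y : pt => y e) = fun _ => if e == c then 1 else 0.
Proof.
apply: functional_extensionality => y; rewrite /pd /upd.
by case: (e == c); [apply: Derive_id | apply: Derive_const].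
Qed.

Lemma ex_pd_coord (e : coord) : ex_pd (fun y => y e).
Proof.
by move=> c y; rewrite /upd; case: (e == c); [apply: ex_derive_id | apply: ex_derive_const].
Qed.

Lemma pcont_const (a : R) : pcont (fun _ : pt => a).
Proof. by move=> y eps He; exists [::], 1; split=> [|y' _]; rewrite ?Rminus_diag ?Rabs_R0; lra. Qed.

Lemma pcont_coord (e : coord) : pcont (fun y : pt => y e).
Proof. by move=> y eps He; exists [:: e], eps; split=> // y'; apply; rewrite inE. Qed.

Lemma pcont_pair (f g : F) y e1 e2 : pcont f -> pcont g -> 0 < e1 -> 0 < e2 ->
  exists (S : seq coord) (delta : R), 0 < delta /\
    forall y', (forall c, c \in S -> Rabs (y' c - y c) < delta) ->
      Rabs (f y' - f y) < e1 /\ Rabs (g y' - g y) < e2.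
Proof.
move=> Hf Hg He1 He2.
have [S1 [d1 [Hd1 H1]]] := Hf y e1 He1; have [S2 [d2 [Hd2 H2]]] := Hg y e2 He2.
exists (S1 ++ S2), (Rmin d1 d2); split=> [|y' H]; first exact: Rmin_pos.
split; [apply: H1 | apply: H2] => c Hc; apply: Rlt_le_trans (H c _) _.
- by rewrite mem_cat Hc.
- exact: Rmin_l.
- by rewrite mem_cat Hc orbT.
- exact: Rmin_r.
Qed.

Lemma pcont_plus (f g : F) : pcont f -> pcont g -> pcont (fun y => f y + g y).
Proof.
move=> Hf Hg y eps He; have He2 : 0 < eps / 2 by lra.
have [S [d [Hd H]]] := pcont_pair y Hf Hg He2 He2.
exists S, d; split=> // y' /H [A B].
have -> : f y' + g y' - (f y + g y) = (f y' - f y) + (g y' - g y) by ring.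
by apply: Rle_lt_trans (Rabs_triang _ _) _; lra.
Qed.

Lemma pcont_mult (f g : F) : pcont f -> pcont g -> pcont (fun y => f y * g y).
Proof.
move=> Hf Hg y eps He.
set a := Rabs (f y); set b := Rabs (g y).
have Ha : 0 <= a by apply: Rabs_pos.
have Hb : 0 <= b by apply: Rabs_pos.
set e := Rmin 1 (eps / (a + b + 1)).
have He0 : 0 < e by apply: Rmin_pos; [lra | apply: Rdiv_lt_0_compat; lra].
have He1 : e <= 1 by apply: Rmin_l.
have He2 : e * (a + b + 1) <= eps.
  apply: Rle_trans (Rmult_le_compat_r _ _ _ _ (Rmin_r 1 (eps / (a + b + 1)))) _; first lra.
  by right; field; lra.
have [S [d [Hd H]]] := pcont_pair y Hf Hg He0 He0.
exists S, d; split=> // y' /H [A B].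
set u := f y' - f y in A; set v := g y' - g y in B.
have -> : f y' * g y' - f y * g y = u * v + u * g y + f y * v by rewrite /u /v; ring.
have Hu := Rabs_pos u; have Hv := Rabs_pos v.
apply: Rle_lt_trans (Rabs_triang _ _) _.
apply: Rle_lt_trans (Rplus_le_compat_r _ _ _ (Rabs_triang _ _)) _.
rewrite !Rabs_mult -/a -/b; nra.
Qed.

Lemma pcont_big (A : Type) (l : seq A) (G : A -> F) :
  (forall q, List.In q l -> pcont (G q)) ->
  pcont (fun y => \big[Rplus/0]_(q <- l) G q y).
Proof.
elim: l => [|q l IH] H.
  have -> : (fun y => \big[Rplus/0]_(q <- [::]) G q y) = fun _ => 0.
    by apply: functional_extensionality => y; rewrite big_nil.
  exact: pcont_const.
have -> : (fun y => \big[Rplus/0]_(q0 <- q :: l) G q0 y) =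
          (fun y => G q y + \big[Rplus/0]_(q0 <- l) G q0 y).
  by apply: functional_extensionality => y; rewrite big_cons.
by apply: pcont_plus; [apply: H; left | apply: IH => q0 Hq0; apply: H; right].
Qed.

(* Smoothness of sums and products is proved through such classes rather than
   by induction on iterated derivatives: by the Leibniz rule, the sums of
   products of members of two classes form again a class. *)
Definition smooth_class (P : F -> Prop) :=
  forall g, P g -> ex_pd g /\ pcont g /\ forall c, P (pd c g).

Lemma smooth_in_class (f : F) : smooth f -> exists P, smooth_class P /\ P f.
Proof.
case=> H1 H2; exists (fun g => exists cs, g = ipd cs f); split; last by exists [::].
move=> g [cs ->]; split; [|split]; [exact: H1 | exact: H2 | by move=> c; exists (c :: cs)].
Qed.

Lemma smooth_class_smooth P (f : F) : smooth_class P -> P f -> smooth f.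
Proof.
move=> HP Pf; have H cs : P (ipd cs f) by elim: cs => [|c cs IH] //=; apply: (HP _ IH).2.2.
by split=> [cs c y|cs]; [apply: (HP _ (H cs)).1 | apply: (HP _ (H cs)).2.1].
Qed.

Definition is_const (g : F) := exists a : R, g = fun _ => a.

Lemma smooth_class_const : smooth_class is_const.
Proof.
move=> g [a ->]; split; [|split].
- by move=> c y; apply: ex_derive_const.
- exact: pcont_const.
- by move=> c; exists 0; apply: pd_const.
Qed.

Lemma smooth_class_coord (e : coord) :
  smooth_class (fun g => g = (fun y => y e) \/ is_const g).
Proof.
move=> g [->|Hg].
  split; [exact: ex_pd_coord | split; [exact: pcont_coord|]].
  by move=> c; right; rewrite pd_coord; eexists.
have [H1 [H2 H3]] := smooth_class_const Hg.
by split=> //; split=> // c; right; apply: H3.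
Qed.

Lemma smooth_class_union P Q : smooth_class P -> smooth_class Q ->
  smooth_class (fun g => P g \/ Q g).
Proof.
move=> HP HQ g [/HP|/HQ] [H1 [H2 H3]]; split=> //; split=> // c; [left | right]; exact: H3.
Qed.

Definition sum_of_products (P Q : F -> Prop) (h : F) :=
  exists l : seq (F * F), (forall q, List.In q l -> P q.1 /\ Q q.2) /\
    h = fun y => \big[Rplus/0]_(q <- l) (q.1 y * q.2 y).

Lemma smooth_class_prod P Q : smooth_class P -> smooth_class Q ->
  smooth_class (sum_of_products P Q).
Proof.
move=> HP HQ h [l [Hl ->]].
have ex_pd_q q : List.In q l -> ex_pd (fun y => q.1 y * q.2 y).
  move=> /Hl [/HP [Pq _] /HQ [Qq _]] c y; exact: ex_derive_mult.
split; [|split].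
- move=> c y /=.
  by apply: (ex_derive_big (G := fun q t => q.1 (upd y c t) * q.2 (upd y c t))) => q /ex_pd_q.
- apply: pcont_big => q /Hl [/HP [_ [Pq _]] /HQ [_ [Qq _]]]; exact: pcont_mult.
- move=> c.
  exists (flatten (map (fun q => [:: (pd c q.1, q.2); (q.1, pd c q.2)]) l)); split.
    move=> q /List.in_flat_map [_ [/List.in_map_iff [q1 [<- /Hl [Pq Qq]]] Hq]].
    by case: Hq => [<-|[<-|//]]; split=> //; [apply: (HP _ Pq).2.2 | apply: (HQ _ Qq).2.2].
  apply: functional_extensionality => y; rewrite pd_big // {ex_pd_q}.
  elim: l Hl => [|q l IH] Hl; first by rewrite !big_nil.
  have [/HP [Pq _] /HQ [Qq _]] := Hl q (or_introl erefl).
  rewrite /= !big_cons /= IH => [|q0 Hq0]; last by apply: Hl; right.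
  by rewrite pd_mult // Rplus_assoc.
Qed.

Lemma smooth_const (a : R) : smooth (fun _ : pt => a).
Proof. by apply: (smooth_class_smooth smooth_class_const); exists a. Qed.

Lemma smooth_coord (e : coord) : smooth (fun y : pt => y e).
Proof.
apply: (smooth_class_smooth (P := fun g => g = (fun y => y e) \/ is_const g)).
  exact: smooth_class_coord.
by left.
Qed.

Lemma smooth_mult (f g : F) : smooth f -> smooth g -> smooth (fun y => f y * g y).
Proof.
move=> /smooth_in_class [P [HP Pf]] /smooth_in_class [Q [HQ Qg]].
apply: (smooth_class_smooth (smooth_class_prod HP HQ)).
exists [:: (f, g)]; split; first by move=> q [<-|//].
by apply: functional_extensionality => y; rewrite big_cons big_nil Rplus_0_r.
Qed.

Lemma smooth_plus (f g : F) : smooth f -> smooth g -> smooth (fun y => f y + g y).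
Proof.
move=> /smooth_in_class [P [HP Pf]] /smooth_in_class [Q [HQ Qg]].
have one_const : is_const (fun _ => 1) by exists 1.
apply: (smooth_class_smooth (smooth_class_prod (smooth_class_union HP smooth_class_const)
                                               (smooth_class_union smooth_class_const HQ))).
exists [:: (f, fun _ => 1); (fun _ => 1, g)]; split.
  by move=> q [<-|[<-|//]]; split; [left | left | right | right].
by apply: functional_extensionality => y; rewrite !big_cons big_nil /=; ring.
Qed.

Lemma smooth_pd (f : F) c : smooth f -> smooth (pd c f).
Proof.
case=> H1 H2; split=> [cs|cs]; [have := H1 (rcons cs c) | have := H2 (rcons cs c)];
  by rewrite /ipd foldr_rcons.
Qed.

Lemma smooth_ex_pd (f : F) : smooth f -> ex_pd f.
Proof. by case=> H1 _ c y; apply: (H1 [::]). Qed.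

Lemma smooth_pcont (f : F) : smooth f -> pcont f.
Proof. by case=> _ H2; apply: (H2 [::]). Qed.

Lemma continuity_2d_upd (h : F) (y : pt) c c' : c != c' -> pcont h ->
  continuity_2d_pt (fun u v => h (upd (upd y c u) c' v)) (y c) (y c').
Proof.
move=> ne Hh eps; have [S [d [Hd H]]] := Hh y eps (cond_pos eps).
exists (mkposreal d Hd) => u v /= Hu Hv; rewrite !upd_id; apply: H => c0 _.
case: (eqVneq c0 c') => [->|n1]; first by rewrite upd_eq.
rewrite upd_neq //; case: (eqVneq c0 c) => [->|n2]; first by rewrite upd_eq.
by rewrite upd_neq // Rminus_diag Rabs_R0.
Qed.

Lemma pd_comm (f : F) c c' (y : pt) : smooth f -> pd c (pd c' f) y = pd c' (pd c f) y.
Proof.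
move=> Hf; case: (eqVneq c c') => [->//|ne]; have ne' : c' != c by rewrite eq_sym.
set g2 := fun u v => f (upd (upd y c u) c' v).
have E1 z v : Derive (fun t => g2 z t) v = pd c' f (upd (upd y c z) c' v).
  rewrite /pd /g2 upd_eq; congr Derive.
  by apply: functional_extensionality => t; rewrite upd_upd.
have E2 z u : Derive (fun t => g2 t z) u = pd c f (upd (upd y c u) c' z).
  rewrite /pd /g2 upd_comm // upd_eq; congr Derive.
  by apply: functional_extensionality => t; rewrite upd_upd -upd_comm.
have E3 u v : Derive (fun z => Derive (fun t => g2 z t) v) u =
              pd c (pd c' f) (upd (upd y c u) c' v).
  rewrite [RHS]/pd -upd_comm // upd_eq; congr Derive.
  by apply: functional_extensionality => z; rewrite E1 upd_comm // upd_upd -upd_comm.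
have E4 u v : Derive (fun z => Derive (fun t => g2 t z) u) v =
              pd c' (pd c f) (upd (upd y c u) c' v).
  rewrite [RHS]/pd upd_eq; congr Derive.
  by apply: functional_extensionality => z; rewrite E2 upd_upd.
have := @Schwarz g2 (y c) (y c'); rewrite E3 E4 !upd_id => -> //.
- exists (mkposreal 1 Rlt_0_1) => u v _ _; split; [|split; [|split]].
  + apply: (ex_derive_ext (fun z => f (upd (upd y c' v) c z))).
      by move=> z; rewrite /g2 upd_comm.
    exact: ex_pd_at (smooth_ex_pd Hf).
  + exact: ex_pd_at (smooth_ex_pd Hf).
  + apply: (ex_derive_ext (fun z => pd c' f (upd (upd y c' v) c z))).
      by move=> z; rewrite E1 upd_comm.
    exact: ex_pd_at (smooth_ex_pd (smooth_pd c' Hf)).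
  + apply: (ex_derive_ext (fun z => pd c f (upd (upd y c u) c' z))).
      by move=> z; rewrite E2.
    exact: ex_pd_at (smooth_ex_pd (smooth_pd c Hf)).
- move=> eps.
  have [d Hd] := continuity_2d_upd y ne (smooth_pcont (smooth_pd c (smooth_pd c' Hf))) eps.
  by exists d => u v Hu Hv; rewrite !E3 !upd_id; have := Hd u v Hu Hv; rewrite !upd_id.
- move=> eps.
  have [d Hd] := continuity_2d_upd y ne (smooth_pcont (smooth_pd c' (smooth_pd c Hf))) eps.
  by exists d => u v Hu Hv; rewrite !E4 !upd_id; have := Hd u v Hu Hv; rewrite !upd_id.
Qed.
End Smooth.

Section TotalDerivative.
Variable n : nat.
Local Notation m := n.+2.
Local Notation F := (F n).
Local Notation pt := (pt n).
Local Notation coord := (coord n).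

Lemma AB_ex_pd (f : F) : AB f -> ex_pd f.
Proof. by case=> _ /smooth_ex_pd. Qed.

Lemma AB_ext (f g : F) : AB f -> (forall y, g y = f y) -> AB g.
Proof. by move=> Hf H; rewrite (functional_extensionality _ _ H). Qed.

Lemma AB_const (a : R) : AB (fun _ : pt => a).
Proof. by split; [exists [::] | apply: smooth_const]. Qed.

Lemma AB_coord (e : coord) : AB (fun y : pt => y e).
Proof. by split; [exists [:: e] => y y'; apply; rewrite inE | apply: smooth_coord]. Qed.

Lemma AB_common_dep (f g : F) : AB f -> AB g ->
  exists S, dep_on f S /\ dep_on g S.
Proof.
move=> [[S1 H1] _] [[S2 H2] _]; exists (S1 ++ S2).
by split; [apply: dep_on_sub H1 _ | apply: dep_on_sub H2 _] => c Hc; rewrite mem_cat Hc ?orbT.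
Qed.

Lemma AB_fadd (f g : F) : AB f -> AB g -> AB (fadd f g).
Proof.
move=> Hf Hg; have [S [H1 H2]] := AB_common_dep Hf Hg.
split; last exact: smooth_plus Hf.2 Hg.2.
by exists S => y y' H; rewrite /fadd (H1 y y') ?(H2 y y').
Qed.

Lemma AB_fmul (f g : F) : AB f -> AB g -> AB (fmul f g).
Proof.
move=> Hf Hg; have [S [H1 H2]] := AB_common_dep Hf Hg.
split; last exact: smooth_mult Hf.2 Hg.2.
by exists S => y y' H; rewrite /fmul (H1 y y') ?(H2 y y').
Qed.

Lemma AB_fscal a (f : F) : AB f -> AB (fscal a f).
Proof. exact: AB_fmul (AB_const a). Qed.

Lemma AB_fopp (f : F) : AB f -> AB (fopp f).
Proof. by move=> /(AB_fscal (-1)) Hf; apply: AB_ext Hf _ => y; rewrite /fopp /fscal; ring. Qed.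

Lemma AB_fsub (f g : F) : AB f -> AB g -> AB (fsub f g).
Proof. by move=> Hf /AB_fopp Hg; apply: AB_ext (AB_fadd Hf Hg) _. Qed.

Lemma AB_fzero : AB (@fzero n).
Proof. exact: AB_const. Qed.

Lemma AB_uf (la : 'I_m) i : AB (uf la i).
Proof. exact: AB_coord. Qed.

Lemma AB_pf i : AB (@pf n i).
Proof. exact: AB_coord. Qed.

Lemma AB_pd (f : F) c : AB f -> AB (pd c f).
Proof. by move=> [[S H] Sf]; split; [exists S; apply: dep_on_pd | apply: smooth_pd]. Qed.

Lemma AB_big (A : Type) (l : seq A) (G : A -> F) :
  (forall q, List.In q l -> AB (G q)) -> AB (fun y => \big[Rplus/0]_(q <- l) G q y).
Proof.
elim: l => [|q l IH] H; first by apply: AB_ext (AB_const 0) _ => y; rewrite big_nil.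
have Hl : AB (fun y => \big[Rplus/0]_(q <- l) G q y) by apply: IH => q0 Hq0; apply: H; right.
by apply: AB_ext (AB_fadd (H q (or_introl erefl)) Hl) _ => y; rewrite big_cons.
Qed.

Definition sN : seq 'I_m := [seq j <- enum 'I_m | j != ord0].

Lemma fsumNE (h : 'I_m -> F) y : fsumN h y = \big[Rplus/0]_(j <- sN) h j y.
Proof. by rewrite /fsumN foldr_Rplus_big. Qed.

Lemma fsumME (h : 'I_m -> F) y : fsumM h y = h ord0 y + \big[Rplus/0]_(j <- sN) h j y.
Proof.
by rewrite /fsumM foldr_Rplus_big (bigD1_seq ord0) ?mem_enum ?enum_uniq //= /sN big_filter.
Qed.

Lemma AB_fsumN (h : 'I_m -> F) : (forall j, AB (h j)) -> AB (fsumN h).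
Proof. by move=> H; apply: AB_ext (AB_big (fun j _ => H j)) (fsumNE h). Qed.

Lemma AB_fsumM (h : 'I_m -> F) : (forall j, AB (h j)) -> AB (fsumM h).
Proof.
move=> H; apply: AB_ext (AB_big (l := enum 'I_m) (fun j _ => H j)) _ => y.
by rewrite /fsumM foldr_Rplus_big.
Qed.

(* [D] is defined through the chosen support [supp f]; [D_on] computes the
   same derivative from any finite set of coordinates that [f] depends on. *)
Definition jets (S : seq coord) := undup (filter (@isjet n) S).

Definition D_on (mu : 'I_m) (f : F) (S : seq coord) : F := fun y =>
  pd (Xc mu) f y + \big[Rplus/0]_(c <- jets S) (y (shift mu c) * pd c f y).

Lemma mem_jets (S : seq coord) c : (c \in jets S) = isjet c && (c \in S).
Proof. by rewrite /jets mem_undup mem_filter. Qed.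

Lemma jets_uniq (S : seq coord) : uniq (jets S).
Proof. exact: undup_uniq. Qed.

Lemma D_on_dep (f : F) S (mu : 'I_m) : AB f -> dep_on f S -> D mu f = D_on mu f S.
Proof.
move=> Hf HS; have Hs : dep_on f (supp f) by apply: epsilon_spec; case: Hf.
apply: functional_extensionality => y; rewrite /D /D_on foldr_map_Rplus_big; congr (_ + _).
set G := fun c => y (shift mu c) * pd c f y.
rewrite (big_filter_vanish (P := mem S)); last first.
  by move=> c _ Hc; rewrite /G (pd_dep_notin y HS Hc) Rmult_0_r.
rewrite [RHS](big_filter_vanish (P := mem (supp f))); last first.
  by move=> c _ Hc; rewrite /G (pd_dep_notin y Hs Hc) Rmult_0_r.
apply/perm_big/uniq_perm; rewrite ?filter_uniq ?undup_uniq // => c.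
by rewrite !(mem_filter, mem_undup) /=; case: (c \in S); case: (isjet c); case: (c \in supp f).
Qed.

Lemma AB_D_on (mu : 'I_m) (f : F) S : AB f -> AB (D_on mu f S).
Proof.
move=> Hf; apply: AB_fadd (AB_pd _ Hf) (AB_big _) => c _.
exact: AB_fmul (AB_coord _) (AB_pd _ Hf).
Qed.

Lemma AB_D (mu : 'I_m) (f : F) : AB f -> AB (D mu f).
Proof. by move=> Hf; have [[S HS] _] := Hf; rewrite (D_on_dep _ Hf HS); apply: AB_D_on. Qed.

Lemma D_fadd (mu : 'I_m) (f g : F) : AB f -> AB g ->
  D mu (fadd f g) = fadd (D mu f) (D mu g).
Proof.
move=> Hf Hg; have [S [H1 H2]] := AB_common_dep Hf Hg; have Hfg := AB_fadd Hf Hg.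
have H12 : dep_on (fadd f g) S by move=> y y' H; rewrite /fadd (H1 y y') ?(H2 y y').
rewrite !(D_on_dep mu _ H1, D_on_dep mu _ H2, D_on_dep mu _ H12) //.
apply: functional_extensionality => y; rewrite /D_on /fadd.
have [ef eg] := (AB_ex_pd Hf, AB_ex_pd Hg).
rewrite pd_plus // (eq_bigr (fun c => y (shift mu c) * pd c f y + y (shift mu c) * pd c g y)).
  by rewrite big_split /=; ring.
by move=> c _; rewrite pd_plus //; ring.
Qed.

Lemma D_fmul (mu : 'I_m) (f g : F) : AB f -> AB g ->
  D mu (fmul f g) = fun y => D mu f y * g y + f y * D mu g y.
Proof.
move=> Hf Hg; have [S [H1 H2]] := AB_common_dep Hf Hg; have Hfg := AB_fmul Hf Hg.
have H12 : dep_on (fmul f g) S by move=> y y' H; rewrite /fmul (H1 y y') ?(H2 y y').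
rewrite !(D_on_dep mu _ H1, D_on_dep mu _ H2, D_on_dep mu _ H12) //.
apply: functional_extensionality => y; rewrite /D_on /fmul.
have [ef eg] := (AB_ex_pd Hf, AB_ex_pd Hg).
rewrite pd_mult // (eq_bigr (fun c =>
  (y (shift mu c) * pd c f y) * g y + f y * (y (shift mu c) * pd c g y))).
  by rewrite big_split /= -big_distrl -big_distrr /=; ring.
by move=> c _; rewrite pd_mult //; ring.
Qed.

Lemma D_const (mu : 'I_m) (a : R) : D mu (fun _ : pt => a) = @fzero n.
Proof.
rewrite (D_on_dep _ (AB_const a) (S := [::])) //.
by apply: functional_extensionality => y; rewrite /D_on pd_const big_nil /fzero; ring.
Qed.

Lemma D_fscal (mu : 'I_m) a (f : F) : AB f -> D mu (fscal a f) = fscal a (D mu f).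
Proof.
move=> Hf; rewrite [fscal a f](_ : _ = fmul (fun _ => a) f) // D_fmul ?D_const //.
  by apply: functional_extensionality => y; rewrite /fscal /fzero; ring.
exact: AB_const.
Qed.

Lemma D_fopp (mu : 'I_m) (f : F) : AB f -> D mu (fopp f) = fopp (D mu f).
Proof.
move=> Hf; have E (g : F) : fopp g = fscal (-1) g.
  by apply: functional_extensionality => y; rewrite /fopp /fscal; ring.
by rewrite !E D_fscal.
Qed.

Lemma D_fsub (mu : 'I_m) (f g : F) : AB f -> AB g ->
  D mu (fsub f g) = fsub (D mu f) (D mu g).
Proof.
by move=> Hf Hg; rewrite [fsub f g](_ : _ = fadd f (fopp g)) // D_fadd ?D_fopp //; apply: AB_fopp.
Qed.

Lemma D_coord (mu : 'I_m) (e : coord) : isjet e ->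
  D mu (fun y : pt => y e) = fun y => y (shift mu e).
Proof.
move=> He; rewrite (D_on_dep _ (AB_coord e) (S := [:: e])); last first.
  by move=> y y'; apply; rewrite inE.
apply: functional_extensionality => y.
rewrite /D_on /jets /= He /= big_cons big_nil !pd_coord eqxx.
have -> : (e == Xc mu) = false by case: e He => [[x|p]|i].
ring.
Qed.

Lemma D_uf (mu la : 'I_m) i : D mu (uf la i) = uf la (addmi i mu).
Proof. exact: D_coord. Qed.

Lemma D_pf (mu : 'I_m) i : D mu (@pf n i) = pf (addmi i mu).
Proof. exact: D_coord. Qed.

Lemma D_big (mu : 'I_m) (A : Type) (l : seq A) (G : A -> F) :
  (forall q, List.In q l -> AB (G q)) ->
  D mu (fun y => \big[Rplus/0]_(q <- l) G q y) = fun y => \big[Rplus/0]_(q <- l) D mu (G q) y.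
Proof.
elim: l => [|q l IH] H.
  have -> : (fun y => \big[Rplus/0]_(q <- [::]) G q y) = fun _ => 0.
    by apply: functional_extensionality => y; rewrite big_nil.
  by rewrite D_const; apply: functional_extensionality => y; rewrite big_nil.
have Hl q0 : List.In q0 l -> AB (G q0) by move=> Hq0; apply: H; right.
have -> : (fun y => \big[Rplus/0]_(q0 <- q :: l) G q0 y) =
          fadd (G q) (fun y => \big[Rplus/0]_(q0 <- l) G q0 y).
  by apply: functional_extensionality => y; rewrite big_cons.
rewrite D_fadd ?IH //; [|by apply: H; left | exact: AB_big].
by apply: functional_extensionality => y; rewrite /fadd big_cons.
Qed.

Lemma D_fsumN (mu : 'I_m) (h : 'I_m -> F) : (forall j, AB (h j)) ->
  D mu (fsumN h) = fsumN (fun j => D mu (h j)).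
Proof.
move=> H; rewrite (functional_extensionality _ _ (fsumNE h)) D_big //.
by apply: functional_extensionality => y; rewrite fsumNE.
Qed.

Lemma D_fsumM (mu : 'I_m) (h : 'I_m -> F) : (forall j, AB (h j)) ->
  D mu (fsumM h) = fsumM (fun j => D mu (h j)).
Proof.
have E (g : 'I_m -> F) : fsumM g = fun y => \big[Rplus/0]_(j <- enum 'I_m) g j y.
  by apply: functional_extensionality => y; rewrite /fsumM foldr_Rplus_big.
by move=> H; rewrite !E D_big.
Qed.
End TotalDerivative.

Section Commutation.
Variable n : nat.
Local Notation m := n.+2.
Local Notation F := (F n).
Local Notation pt := (pt n).
Local Notation coord := (coord n).

Lemma addmiC (i : mi n) (a b : 'I_m) : addmi (addmi i a) b = addmi (addmi i b) a.
Proof. by apply/ffunP => j; rewrite !ffunE -!addnA (addnC (j == a)). Qed.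

Lemma addmi_unitmiC (x y : 'I_m) : addmi (unitmi x) y = addmi (unitmi y) x :> mi n.
Proof. exact: addmiC. Qed.

Lemma addmi_unitmi3C (x y z : 'I_m) :
  addmi (addmi (unitmi x) y) z = addmi (addmi (unitmi y) z) x :> mi n.
Proof. by rewrite addmi_unitmiC addmiC. Qed.

Lemma shiftC (mu nu : 'I_m) (c : coord) : shift mu (shift nu c) = shift nu (shift mu c).
Proof. by case: c => [[x|[la i]]|i] //=; rewrite /Uc /Pc addmiC. Qed.

Lemma isjet_shift (mu : 'I_m) (c : coord) : isjet (shift mu c) = isjet c.
Proof. by case: c => [[x|[la i]]|i]. Qed.

Lemma jet_neq_Xc (mu : 'I_m) (c : coord) : isjet c -> (c == Xc mu) = false.
Proof. by case: c => [[x|[la i]]|i]. Qed.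

Lemma pd_D_on (nu : 'I_m) (f : F) S c' (y : pt) : AB f ->
  pd c' (D_on nu f S) y = pd c' (pd (Xc nu) f) y +
   \big[Rplus/0]_(c <- jets S) ((if shift nu c == c' then 1 else 0) * pd c f y
                                + y (shift nu c) * pd c' (pd c f) y).
Proof.
move=> Hf; have AB_term c : AB (fun y : pt => y (shift nu c) * pd c f y).
  exact: AB_fmul (AB_coord _) (AB_pd _ Hf).
rewrite /D_on pd_plus; [|exact/AB_ex_pd/AB_pd | exact/AB_ex_pd/AB_big].
rewrite pd_big => [|q _]; last exact: AB_ex_pd.
congr (_ + _); apply: eq_bigr => c _.
by rewrite (pd_mult (f := fun y => y (shift nu c))) ?pd_coord //;
  [apply: ex_pd_coord | exact/AB_ex_pd/AB_pd].
Qed.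

Lemma dep_on_D_on (nu : 'I_m) (f : F) S : dep_on f S ->
  dep_on (D_on nu f S) (S ++ map (shift nu) S).
Proof.
move=> HS y y' H.
have Hy c : c \in S -> y c = y' c by move=> Hc; apply: H; rewrite mem_cat Hc.
rewrite /D_on (dep_on_pd _ HS Hy); congr (_ + _).
apply: eq_big_seq => c; rewrite mem_jets => /andP [_ Hc].
by rewrite (dep_on_pd _ HS Hy) H // mem_cat map_f ?orbT.
Qed.

Lemma big_jets_shift_cat (nu : 'I_m) S (G : coord -> R) :
  (forall c, c \notin S -> G c = 0) ->
  \big[Rplus/0]_(c <- jets (S ++ map (shift nu) S)) G c = \big[Rplus/0]_(c <- jets S) G c.
Proof.
move=> HG; apply: big_uniq_subset (jets_uniq _) (jets_uniq _) _ _ => c.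
  by rewrite !mem_jets mem_cat => /andP [-> ->].
by rewrite !mem_jets mem_cat => /andP [-> _] /= HcS; apply: HG.
Qed.

Lemma big_jets_delta_shift (nu : 'I_m) S (G : coord -> coord -> R) :
  \big[Rplus/0]_(c' <- jets (S ++ map (shift nu) S)) \big[Rplus/0]_(c <- jets S)
     ((if shift nu c == c' then 1 else 0) * G c' c)
  = \big[Rplus/0]_(c <- jets S) G (shift nu c) c.
Proof.
rewrite exchange_big /=; apply: eq_big_seq => c; rewrite mem_jets => /andP [jc Sc].
rewrite (big_delta (G^~ c)) ?jets_uniq //.
by rewrite mem_jets isjet_shift jc mem_cat map_f ?orbT.
Qed.

Definition D2_on (mu nu : 'I_m) (f : F) S (y : pt) :=
  pd (Xc mu) (pd (Xc nu) f) y
  + \big[Rplus/0]_(c <- jets S) (y (shift nu c) * pd (Xc mu) (pd c f) y)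
  + \big[Rplus/0]_(c <- jets S) (y (shift mu c) * pd c (pd (Xc nu) f) y)
  + \big[Rplus/0]_(c' <- jets S) \big[Rplus/0]_(c <- jets S)
        (y (shift mu c') * (y (shift nu c) * pd c' (pd c f) y))
  + \big[Rplus/0]_(c <- jets S) (y (shift mu (shift nu c)) * pd c f y).

Lemma D_D_on (mu nu : 'I_m) (f : F) S : AB f -> dep_on f S ->
  D mu (D nu f) = D2_on mu nu f S.
Proof.
move=> Hf HS; have HS2 := dep_on_D_on (nu := nu) HS.
rewrite (D_on_dep nu Hf HS) (D_on_dep mu (AB_D_on nu S Hf) HS2).
apply: functional_extensionality => y; rewrite {1}/D_on pd_D_on //.
set L := jets S; set L2 := jets (S ++ map (shift nu) S).
have E1 : \big[Rplus/0]_(c <- L) ((if shift nu c == Xc mu then 1 else 0) * pd c f y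
      + y (shift nu c) * pd (Xc mu) (pd c f) y)
    = \big[Rplus/0]_(c <- L) (y (shift nu c) * pd (Xc mu) (pd c f) y).
  apply: eq_big_seq => c; rewrite mem_jets => /andP [jc _].
  by rewrite jet_neq_Xc ?isjet_shift //; ring.
have EA : \big[Rplus/0]_(c' <- L2) (y (shift mu c') * pd c' (pd (Xc nu) f) y)
    = \big[Rplus/0]_(c <- L) (y (shift mu c) * pd c (pd (Xc nu) f) y).
  by apply: big_jets_shift_cat => c Hc; rewrite (pd_dep_notin _ (dep_on_pd _ HS) Hc); ring.
have EC : \big[Rplus/0]_(c' <- L2) \big[Rplus/0]_(c <- L)
      (y (shift mu c') * (y (shift nu c) * pd c' (pd c f) y))
    = \big[Rplus/0]_(c' <- L) \big[Rplus/0]_(c <- L)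
      (y (shift mu c') * (y (shift nu c) * pd c' (pd c f) y)).
  apply: big_jets_shift_cat => c Hc; apply: big1 => c0 _.
  by rewrite (pd_dep_notin _ (dep_on_pd _ HS) Hc); ring.
have E2 : \big[Rplus/0]_(c' <- L2) (y (shift mu c') * pd c' (D_on nu f S) y)
    = \big[Rplus/0]_(c <- L) (y (shift mu c) * pd c (pd (Xc nu) f) y)
      + \big[Rplus/0]_(c <- L) (y (shift mu (shift nu c)) * pd c f y)
      + \big[Rplus/0]_(c' <- L) \big[Rplus/0]_(c <- L)
          (y (shift mu c') * (y (shift nu c) * pd c' (pd c f) y)).
  rewrite (eq_bigr (fun c' => y (shift mu c') * pd c' (pd (Xc nu) f) y
    + \big[Rplus/0]_(c <- L) ((if shift nu c == c' then 1 else 0) * (y (shift mu c') * pd c f y))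
    + \big[Rplus/0]_(c <- L) (y (shift mu c') * (y (shift nu c) * pd c' (pd c f) y)))).
    by rewrite !big_split /= EA big_jets_delta_shift EC.
  move=> c' _; rewrite pd_D_on // Rmult_plus_distr_l big_distrr /= [RHS]Rplus_assoc -big_split /=.
  by congr (_ + _); apply: eq_bigr => c _; ring.
by rewrite E1 E2 /D2_on -/L; ring.
Qed.

Lemma D_comm (mu nu : 'I_m) (f : F) : AB f -> D mu (D nu f) = D nu (D mu f).
Proof.
move=> Hf; have [[S HS] Sf] := Hf; rewrite !(D_D_on _ _ Hf HS).
apply: functional_extensionality => y; rewrite /D2_on.
have T1 : pd (Xc mu) (pd (Xc nu) f) y = pd (Xc nu) (pd (Xc mu) f) y by apply: pd_comm.
have T23 a b : \big[Rplus/0]_(c <- jets S) (y (shift b c) * pd (Xc a) (pd c f) y)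
   = \big[Rplus/0]_(c <- jets S) (y (shift b c) * pd c (pd (Xc a) f) y).
  by apply: eq_bigr => c _; rewrite (pd_comm _ _ _ Sf).
have T4 : \big[Rplus/0]_(c' <- jets S) \big[Rplus/0]_(c <- jets S)
        (y (shift mu c') * (y (shift nu c) * pd c' (pd c f) y))
   = \big[Rplus/0]_(c' <- jets S) \big[Rplus/0]_(c <- jets S)
        (y (shift nu c') * (y (shift mu c) * pd c' (pd c f) y)).
  rewrite exchange_big /=; apply: eq_bigr => c _; apply: eq_bigr => c' _.
  by rewrite (pd_comm _ _ _ Sf); ring.
have T5 : \big[Rplus/0]_(c <- jets S) (y (shift mu (shift nu c)) * pd c f y)
   = \big[Rplus/0]_(c <- jets S) (y (shift nu (shift mu c)) * pd c f y).
  by apply: eq_bigr => c _; rewrite shiftC.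
by rewrite T1 !T23 T4 T5; ring.
Qed.
End Commutation.

Section Ideal.
Variable n : nat.
Local Notation m := n.+2.
Local Notation F := (F n).
Local Notation pt := (pt n).

Definition D_iters (s : seq 'I_m) (i : mi n) (f : F) : F :=
  foldr (fun j g => iter (i j) (D j) g) f s.

Lemma AB_iter k (j : 'I_m) (f : F) : AB f -> AB (iter k (D j) f).
Proof. by move=> Hf; elim: k => [|k IH] //=; apply: AB_D. Qed.

Lemma AB_D_iters s i (f : F) : AB f -> AB (D_iters s i f).
Proof. by move=> Hf; elim: s => [|j s IH] //=; apply: AB_iter. Qed.

Lemma D_iter (mu j : 'I_m) k (g : F) : AB g -> D mu (iter k (D j) g) = iter k (D j) (D mu g).
Proof. by move=> Hg; elim: k => [|k IH] //=; rewrite D_comm ?IH //; apply: AB_iter. Qed.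

Lemma D_iters_addmi_notin s i (mu : 'I_m) (f : F) :
  mu \notin s -> D_iters s (addmi i mu) f = D_iters s i f.
Proof.
elim: s => [|j s IH] //=; rewrite inE negb_or => /andP [ne Hs].
by rewrite IH // /addmi ffunE eq_sym (negbTE ne) addn0.
Qed.

Lemma D_D_iters s i (mu : 'I_m) (f : F) : AB f -> uniq s -> mu \in s ->
  D mu (D_iters s i f) = D_iters s (addmi i mu) f.
Proof.
move=> Hf; elim: s => [|j s IH] //= /andP [Hj us]; rewrite inE.
case: (eqVneq mu j) => [->|ne] /= Hm.
  by rewrite D_iters_addmi_notin // /addmi ffunE eqxx addn1.
rewrite D_iter ?IH //; last exact: AB_D_iters.
by rewrite /addmi ffunE eq_sym (negbTE ne) addn0.
Qed.

Lemma D_Di (mu : 'I_m) i (f : F) : AB f -> D mu (Di i f) = Di (addmi i mu) f.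
Proof. by move=> Hf; apply: D_D_iters => //; [apply: enum_uniq | apply: mem_enum]. Qed.

Definition Qform : F := fsumM (fun la => fsumM (fun mu =>
  fmul (uf la (unitmi mu)) (uf mu (unitmi la)))).

Lemma AB_Qform : AB Qform.
Proof. by do 2!apply: AB_fsumM => ?; apply: AB_fmul; apply: AB_uf. Qed.

Lemma AB_CE i : AB (@CE n i).
Proof. by apply: AB_fsumM => mu; apply: AB_uf. Qed.

Lemma AB_PE i : AB (@PE n i).
Proof.
apply: AB_fadd; last exact: (AB_D_iters _ _ AB_Qform).
by apply: AB_fsumM => mu; apply: AB_pf.
Qed.

Lemma AB_gen b i : AB (@gen n b i).
Proof. by case: b; [apply: AB_CE | apply: AB_PE]. Qed.

Lemma D_CE (mu : 'I_m) i : D mu (CE i) = CE (addmi i mu).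
Proof.
rewrite /CE D_fsumM => [|j]; last exact: AB_uf.
by congr fsumM; apply: functional_extensionality => la; rewrite D_uf addmiC.
Qed.

Lemma D_PE (mu : 'I_m) i : D mu (PE i) = PE (addmi i mu).
Proof.
rewrite /PE D_fadd;
  [|by apply: AB_fsumM => j; apply: AB_pf | exact: (AB_D_iters _ _ AB_Qform)].
rewrite D_fsumM => [|j]; last exact: AB_pf.
rewrite (D_Di _ _ AB_Qform); congr fadd.
congr fsumM; apply: functional_extensionality => la.
by rewrite D_pf addmiC [addmi (addmi i mu) la]addmiC.
Qed.

Lemma D_gen (mu : 'I_m) b i : D mu (gen b i) = gen b (addmi i mu).
Proof. by case: b; [apply: D_CE | apply: D_PE]. Qed.

Definition Jcomb (l : list (F * (bool * mi n))) : F :=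
  fun y => List.fold_right (fun q acc => q.1 y * gen q.2.1 q.2.2 y + acc) 0 l.

Lemma inJ_ext (f g : F) : inJ g -> (forall y, f y = g y) -> inJ f.
Proof. by move=> [l [H1 H2]] H; exists l; split=> // y; rewrite H H2. Qed.

Lemma inJ_fzero : inJ (@fzero n).
Proof. by exists [::]. Qed.

Lemma inJ_fadd (f g : F) : inJ f -> inJ g -> inJ (fadd f g).
Proof.
move=> [l1 [A1 B1]] [l2 [A2 B2]]; exists (l1 ++ l2); split.
  by move=> q Hq; case: (List.in_app_or _ _ _ Hq) => ?; [apply: A1 | apply: A2].
move=> y; rewrite /fadd B1 B2 {A1 B1}; elim: l1 => [|q l1 IH] /=; first ring.
by rewrite -IH; ring.
Qed.

Lemma inJ_fmul (h f : F) : AB h -> inJ f -> inJ (fmul h f).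
Proof.
move=> Hh [l [A B]]; exists (map (fun q => (fmul h q.1, q.2)) l); split.
  by move=> q /List.in_map_iff [q0 [<- /A Hq0]]; apply: AB_fmul.
move=> y; rewrite /fmul B {A B}; elim: l => [|q l IH] /=; first ring.
rewrite -IH; set t := List.fold_right _ _ l; set g := gen _ _ _; set a := q.1 y; ring.
Qed.

Lemma inJ_gen b i : inJ (@gen n b i).
Proof.
exists [:: (fun _ => 1, (b, i))]; split; last by move=> y /=; ring.
by move=> q [<-|//]; apply: AB_const.
Qed.

Lemma AB_Jcomb l : (forall q, List.In q l -> AB q.1) -> AB (Jcomb l).
Proof.
elim: l => [|q l IH] H; first exact: AB_const.
apply: (AB_fadd (f := fmul q.1 (gen q.2.1 q.2.2)) (g := Jcomb l)).
  by apply: AB_fmul; [apply: H; left | apply: AB_gen].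
by apply: IH => q0 Hq0; apply: H; right.
Qed.

Lemma inJ_D (mu : 'I_m) (f : F) : inJ f -> inJ (D mu f).
Proof.
move=> [l [A B]]; rewrite (functional_extensionality f (Jcomb l) B) {B}.
elim: l A => [|q l IH] A; first by rewrite D_const; apply: inJ_fzero.
have Aq : AB q.1 by apply: A; left.
have Al q0 : List.In q0 l -> AB q0.1 by move=> Hq0; apply: A; right.
rewrite (_ : Jcomb _ = fadd (fmul q.1 (gen q.2.1 q.2.2)) (Jcomb l)) //.
rewrite D_fadd; [|by apply: AB_fmul; [|apply: AB_gen] | exact: AB_Jcomb].
apply: inJ_fadd; last exact: IH.
rewrite D_fmul ?D_gen //; last exact: AB_gen.
apply: (inJ_ext (g := fadd (fmul (D mu q.1) (gen q.2.1 q.2.2))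
                           (fmul q.1 (gen q.2.1 (addmi q.2.2 mu))))) => //.
by apply: inJ_fadd; apply: inJ_fmul (inJ_gen _ _) => //; apply: AB_D.
Qed.

Lemma inJ_lincomb (f : F) (l : seq (F * F)) :
  (forall q, List.In q l -> AB q.1 /\ inJ q.2) ->
  (forall y, f y = \big[Rplus/0]_(q <- l) (q.1 y * q.2 y)) -> inJ f.
Proof.
elim: l f => [|q l IH] f H Hf.
  by apply: inJ_ext inJ_fzero _ => y; rewrite Hf big_nil.
have [Aq Jq] := H q (or_introl erefl).
have Jl : inJ (fun y => \big[Rplus/0]_(q0 <- l) (q0.1 y * q0.2 y)).
  by apply: IH => [q0 Hq0|//]; apply: H; right.
apply: (inJ_ext (inJ_fadd (inJ_fmul Aq Jq) Jl)).
by move=> y; rewrite Hf big_cons.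
Qed.

Lemma inJ_comb2 (f a b : F) (ka kb : R) : inJ a -> inJ b ->
  (forall y, f y = ka * a y + kb * b y) -> inJ f.
Proof.
move=> Ja Jb Hf; apply: (inJ_lincomb (l := [:: (fun _ => ka, a); (fun _ => kb, b)])).
  by move=> q [<-|[<-|//]]; split=> //; apply: AB_const.
by move=> y; rewrite Hf !big_cons big_nil /=; ring.
Qed.

Lemma eqJ0 (f : F) : eqJ f (@fzero n) <-> inJ f.
Proof. by split=> Jf; apply: inJ_ext Jf _ => y; rewrite /fsub /fzero; ring. Qed.
End Ideal.

Ltac solve_AB := repeat match goal with
 | |- forall _, _ => intro
 | |- AB (fadd _ _) => apply: AB_fadd
 | |- AB (fmul _ _) => apply: AB_fmul
 | |- AB (fscal _ _) => apply: AB_fscal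
 | |- AB (fsub _ _) => apply: AB_fsub
 | |- AB (fopp _) => apply: AB_fopp
 | |- AB (D _ _) => apply: AB_D
 | |- AB (uf _ _) => apply: AB_uf
 | |- AB (fsumN _) => apply: AB_fsumN
 | |- AB (fsumM _) => apply: AB_fsumM
 | |- AB ((fun _ => _) _) => cbv beta
 | |- AB _ => first [assumption | exact: AB_fzero | exact: AB_const]
 end.

Section Identities.
Variable n : nat.
Local Notation m := n.+2.
Local Notation F := (F n).
Variable g : F.
Hypothesis Hg : AB g.

Definition ub : F := fsumN (fun b => uf b (unitmi b)).

Lemma D_fmul_uf (mu la : 'I_m) i (h : F) : AB h ->
  D mu (fmul (uf la i) h) = fadd (fmul (uf la (addmi i mu)) h) (fmul (uf la i) (D mu h)).
Proof. by move=> Hh; rewrite D_fmul ?D_uf //; apply: AB_uf. Qed.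

Lemma D_ub (mu : 'I_m) : D mu ub = fsumN (fun b => uf b (addmi (unitmi b) mu)).
Proof.
rewrite /ub D_fsumN => [|b]; last exact: AB_uf.
by congr fsumN; apply: functional_extensionality => b; apply: D_uf.
Qed.

Lemma div_fmul_ufE i y :
  fsumN (fun b => D b (fmul (uf b i) g)) y =
  \big[Rplus/0]_(b <- sN n) (uf b (addmi i b) y * g y + uf b i y * D b g y).
Proof. by rewrite fsumNE; apply: eq_bigr => b _; rewrite D_fmul_uf. Qed.

Lemma D_div_fmul_uf (a : 'I_m) i y :
  D a (fsumN (fun b => D b (fmul (uf b i) g))) y =
  \big[Rplus/0]_(b <- sN n) (uf b (addmi (addmi i b) a) y * g y
     + uf b (addmi i b) y * D a g y + uf b (addmi i a) y * D b g y
     + uf b i y * D b (D a g) y).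
Proof.
rewrite D_fsumN; last by solve_AB.
rewrite fsumNE; apply: eq_bigr => b _.
rewrite !D_fmul_uf; try by solve_AB.
rewrite D_fadd; try by solve_AB.
rewrite !D_fmul_uf ?(D_comm a b Hg) /fadd /fmul; try by solve_AB.
ring.
Qed.

Lemma D_D_fmul_ub (a mu : 'I_m) y :
  D mu (D a (fmul ub g)) y =
  fsumN (fun b => uf b (addmi (addmi (unitmi b) a) mu)) y * g y
  + fsumN (fun b => uf b (addmi (unitmi b) a)) y * D mu g y
  + fsumN (fun b => uf b (addmi (unitmi b) mu)) y * D a g y
  + ub y * D mu (D a g) y.
Proof.
have AB_ub : AB ub by rewrite /ub; solve_AB.
rewrite D_fmul // D_ub.
rewrite (_ : (fun y => _) =
  fadd (fmul (fsumN (fun b => uf b (addmi (unitmi b) a))) g) (fmul ub (D a g))) //.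
rewrite D_fadd; try by solve_AB.
rewrite !D_fmul ?D_ub ?D_fsumN /fadd; try by solve_AB.
rewrite !fsumNE; under [X in X * g y]eq_bigr => b _ do rewrite D_uf.
ring.
Qed.

Lemma D_fsumM_fmul_uf_D (nu : 'I_m) i y :
  D nu (fsumM (fun mu => fmul (uf mu i) (D mu g))) y =
  fsumM (fun mu => fadd (fmul (uf mu (addmi i nu)) (D mu g))
                        (fmul (uf mu i) (D mu (D nu g)))) y.
Proof.
rewrite D_fsumM; last by solve_AB.
congr (fsumM _ y); apply: functional_extensionality => mu.
by rewrite D_fmul_uf ?(D_comm nu mu Hg); solve_AB.
Qed.
End Identities.

Section System.
Variable n : nat.
Local Notation m := n.+2.
Local Notation F := (F n).
Variables (chiu : F) (chik : nat -> 'I_m -> F) (chip0 chip1 : F).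
Hypothesis Hu : AB chiu.
Hypothesis Hk : forall k a, a != ord0 -> AB (chik k a).
Hypotheses (Hp0 : AB chip0) (Hp1 : AB chip1).

Definition sys_u : F :=
  fadd (D ord0 chiu) (fscal 2 (fsumN (fun a => D a (fmul (uf a (unitmi ord0)) chip1)))).

Definition sys_chi (k : nat) (a : 'I_m) : F :=
  fadd (D ord0 (chik k a))
    (fadd (if k == 0%N then D a chiu else @fzero n)
    (fadd (if k is k'.+1 then chik k' a else @fzero n)
      (fscal 2
        (fadd (if k == 0%N then D a (fmul (@ub n) chip1) else @fzero n)
        (fadd (if k == 1%N then fopp (fmul (uf ord0 (unitmi a)) chip1) else @fzero n)
              (if k == 0%N then fsumN (fun b => D b (fmul (uf b (unitmi a)) chip1))
               else @fzero n)))))).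

Definition sys_p0 : F := fsub (D ord0 chip0) (lap' chip1).
Definition sys_p1 : F := fadd (D ord0 chip1) chip0.

Definition chi0_sol (a : 'I_m) : F := fscal 2 (fmul (uf ord0 (unitmi a)) chip1).

Definition D1_chiu_sol : F :=
  fscal (-2) (fsumN (fun a => D a (fmul (uf a (unitmi ord0)) chip1))).

Definition Da_chiu_sol (a : 'I_m) : F :=
  fscal (-2) (fadd (fsumM (fun mu => fmul (uf mu (unitmi a)) (D mu chip1)))
                   (D a (fmul (@ub n) chip1))).

Definition compat (a : 'I_m) : F :=
  fsumM (fun mu => fsub (fmul (uf mu (unitmi ord0)) (D mu (D a chip1)))
                        (fmul (uf mu (unitmi a)) (D mu (D ord0 chip1)))).

Lemma compat_residual (a : 'I_m) y :
  compat a y =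
  /2 * D a (fsub (D ord0 chiu) D1_chiu_sol) y
  - /2 * D ord0 (fsub (D a chiu) (Da_chiu_sol a)) y
  + CE (unitmi a) y * D ord0 chip1 y + CE (mi0 n) y * D ord0 (D a chip1) y.
Proof.
have AB_ub : AB (@ub n) by rewrite /ub; solve_AB.
rewrite /D1_chiu_sol /Da_chiu_sol !D_fsub; try by solve_AB.
rewrite !D_fscal; try by solve_AB.
rewrite D_fadd; try by solve_AB.
rewrite (D_comm a ord0 Hu) /fsub /fscal /fadd.
rewrite D_div_fmul_uf // D_fsumM_fmul_uf_D // D_D_fmul_ub //.
rewrite (_ : CE (mi0 n) = fsumM (fun mu => uf mu (unitmi mu))) //.
rewrite /compat /CE /ub /fsub /fadd /fmul !fsumNE !fsumME.
rewrite big_Rminus !big_split /= -!big_distrl /=.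
have E3 : \big[Rplus/0]_(b <- sN n) uf b (addmi (addmi (unitmi ord0) b) a) y =
          \big[Rplus/0]_(b <- sN n) uf b (addmi (addmi (unitmi b) a) ord0) y.
  by apply: eq_bigr => b _; rewrite addmi_unitmi3C.
have E1 : \big[Rplus/0]_(b <- sN n) uf b (addmi (unitmi ord0) b) y =
          \big[Rplus/0]_(b <- sN n) uf b (addmi (unitmi b) ord0) y.
  by apply: eq_bigr => b _; rewrite addmi_unitmiC.
have Ea : \big[Rplus/0]_(b <- sN n) uf b (addmi (unitmi a) b) y =
          \big[Rplus/0]_(b <- sN n) uf b (addmi (unitmi b) a) y.
  by apply: eq_bigr => b _; rewrite addmi_unitmiC.
rewrite E3 E1 Ea (addmi_unitmiC ord0 a); field.
Qed.
Lemma Da_chiu_residual (a : 'I_m) y : a != ord0 ->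
  fsub (D a chiu) (Da_chiu_sol a) y =
  sys_chi 0 a y - D ord0 (fsub (chik 0 a) (chi0_sol a)) y - 2 * (chip1 y * CE (unitmi a) y).
Proof.
move=> Ha; have Hk0 := Hk 0 Ha.
rewrite /sys_chi /chi0_sol /Da_chiu_sol /= D_fsub; try by solve_AB.
rewrite D_fscal ?D_fmul_uf; try by solve_AB.
rewrite /fsub /fadd /fscal /fzero /fmul div_fmul_ufE // /CE !fsumME.
rewrite big_split /= -big_distrl /=.
ring.
Qed.
Lemma sys_chi_succ2 k a y : sys_chi k.+2 a y = D ord0 (chik k.+2 a) y + chik k.+1 a y.
Proof. by rewrite /sys_chi /= /fadd /fscal /fzero; ring. Qed.

Lemma sys_chi1 a y :
  sys_chi 1 a y = D ord0 (chik 1 a) y + fsub (chik 0 a) (chi0_sol a) y.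
Proof. by rewrite /sys_chi /chi0_sol /= /fadd /fscal /fzero /fsub /fopp /fmul; ring. Qed.

Lemma lap_residual y : lap chip1 y = D ord0 sys_p1 y - sys_p0 y.
Proof.
rewrite /sys_p1 D_fadd; try by solve_AB.
by rewrite /lap fsumME /sys_p0 /lap' /fsub /fadd fsumNE; ring.
Qed.

Lemma chik_high_inJ :
  (forall k a, a != ord0 -> inJ (sys_chi k a)) ->
  (exists K, forall k a, (K <= k)%N -> a != ord0 -> inJ (chik k a)) ->
  forall k a, (1 <= k)%N -> a != ord0 -> inJ (chik k a).
Proof.
move=> Hsys [K HK].
suff H d k a : (K <= k + d)%N -> (1 <= k)%N -> a != ord0 -> inJ (chik k a).
  by move=> k a Hk1 Ha; apply: (H K) => //; apply: leq_addl.
elim: d k a => [|d IH] k a Hkd Hk1 Ha; first by apply: HK; rewrite // -(addn0 k).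
have Jk1 : inJ (chik k.+1 a) by apply: IH => //; rewrite addSnnS.
case: k Hk1 Hkd Jk1 => [//|k] _ _ Jk1.
apply: (inJ_comb2 (ka := 1) (kb := -1) (Hsys k.+2 a Ha) (inJ_D ord0 Jk1)) => y.
by rewrite sys_chi_succ2; ring.
Qed.
Definition system : Prop :=
  eqJ sys_u (@fzero n)
  /\ (forall k a, a != ord0 -> eqJ (sys_chi k a) (@fzero n))
  /\ eqJ sys_p0 (@fzero n)
  /\ eqJ sys_p1 (@fzero n).

Definition solution : Prop :=
  (forall a, a != ord0 -> eqJ (chik 0 a) (chi0_sol a))
  /\ (forall k a, (1 <= k)%N -> a != ord0 -> eqJ (chik k a) (@fzero n))
  /\ eqJ chip0 (fopp (D ord0 chip1))
  /\ eqJ (lap chip1) (@fzero n)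
  /\ (forall a, a != ord0 -> eqJ (compat a) (@fzero n))
  /\ eqJ (D ord0 chiu) D1_chiu_sol
  /\ (forall a, a != ord0 -> eqJ (D a chiu) (Da_chiu_sol a)).

Lemma system_solution :
  (exists K, forall k a, (K <= k)%N -> a != ord0 -> inJ (chik k a)) ->
  system -> solution.
Proof.
move=> HK [/eqJ0 Ju [Jchi [/eqJ0 Jp0 /eqJ0 Jp1]]].
have {}Jchi k a : a != ord0 -> inJ (sys_chi k a) by move/Jchi/eqJ0.
have Jhigh := chik_high_inJ Jchi HK.
have Jchi0 a : a != ord0 -> eqJ (chik 0 a) (chi0_sol a).
  move=> Ha; have Jk1 := inJ_D ord0 (Jhigh 1%N a (leqnn 1) Ha).
  rewrite /eqJ; apply: (inJ_comb2 (ka := 1) (kb := -1) (Jchi 1%N a Ha) Jk1) => y.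
  by rewrite sys_chi1; ring.
have JD1 : eqJ (D ord0 chiu) D1_chiu_sol.
  by apply: inJ_ext Ju _ => y; rewrite /sys_u /D1_chiu_sol /fsub /fadd /fscal; ring.
have JDa a : a != ord0 -> eqJ (D a chiu) (Da_chiu_sol a).
  move=> Ha; rewrite /eqJ; apply: (inJ_lincomb (l := [:: (fun _ => 1, sys_chi 0 a);
    (fun _ => -1, D ord0 (fsub (chik 0 a) (chi0_sol a))); (fscal (-2) chip1, CE (unitmi a))])).
    move=> q [<-|[<-|[<-|//]]]; split=> /=.
    - exact: AB_const.
    - exact: Jchi.
    - exact: AB_const.
    - by apply: inJ_D; apply: Jchi0.
    - by solve_AB.
    - exact: (inJ_gen true).
  by move=> y; rewrite Da_chiu_residual // !big_cons big_nil /fscal /=; ring.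
split=> //; split; first by move=> k a Hk1 Ha; apply/eqJ0/Jhigh.
split; first by apply: inJ_ext Jp1 _ => y; rewrite /sys_p1 /fsub /fadd /fopp; ring.
split.
  apply/eqJ0/(inJ_comb2 (ka := 1) (kb := -1) (inJ_D ord0 Jp1) Jp0) => y.
  by rewrite lap_residual; ring.
split=> //; move=> a Ha; apply/eqJ0.
apply: (inJ_lincomb (l := [:: (fun _ => /2, D a (fsub (D ord0 chiu) D1_chiu_sol));
  (fun _ => - /2, D ord0 (fsub (D a chiu) (Da_chiu_sol a)));
  (D ord0 chip1, CE (unitmi a)); (D ord0 (D a chip1), CE (mi0 n))])).
  move=> q [<-|[<-|[<-|[<-|//]]]]; split=> /=; try by solve_AB.
  - by apply: inJ_D; apply: JD1.
  - by apply: inJ_D; apply: JDa.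
  - exact: (inJ_gen true).
  - exact: (inJ_gen true).
by move=> y; rewrite compat_residual !big_cons big_nil /=; ring.
Qed.
Lemma solution_system : solution -> system.
Proof.
move=> [Jchi0 [Jhigh [Jp1 [/eqJ0 Jlap [_ [JD1 JDa]]]]]].
have {}Jhigh k a : (1 <= k)%N -> a != ord0 -> inJ (chik k a) by move=> Hk1 Ha; apply/eqJ0/Jhigh.
have {}Jp1 : inJ sys_p1 by apply: inJ_ext Jp1 _ => y; rewrite /sys_p1 /fsub /fadd /fopp; ring.
split; [|split; [|split]].
- apply/eqJ0/(inJ_ext JD1) => y.
  by rewrite /sys_u /D1_chiu_sol /fsub /fadd /fscal; ring.
- move=> [|[|k]] a Ha; apply/eqJ0.
  + apply: (inJ_lincomb (l := [:: (fun _ => 1, fsub (D a chiu) (Da_chiu_sol a));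
      (fun _ => 1, D ord0 (fsub (chik 0 a) (chi0_sol a))); (fscal 2 chip1, CE (unitmi a))])).
      move=> q [<-|[<-|[<-|//]]]; split=> /=; try by solve_AB.
      * exact: JDa.
      * by apply: inJ_D; apply: Jchi0.
      * exact: (inJ_gen true).
    move=> y; have E := Da_chiu_residual y Ha.
    by rewrite !big_cons big_nil /= E /fscal; ring.
  + have Jk1 := inJ_D ord0 (Jhigh 1%N a (leqnn 1) Ha).
    apply: (inJ_comb2 (ka := 1) (kb := 1) Jk1 (Jchi0 a Ha)) => y.
    by rewrite sys_chi1; ring.
  + have Jk2 := inJ_D ord0 (Jhigh k.+2 a erefl Ha).
    apply: (inJ_comb2 (ka := 1) (kb := 1) Jk2 (Jhigh k.+1 a erefl Ha)) => y.
    by rewrite sys_chi_succ2; ring.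
- apply/eqJ0/(inJ_comb2 (ka := 1) (kb := -1) (inJ_D ord0 Jp1) Jlap) => y.
  by rewrite lap_residual; ring.
- exact/eqJ0.
Qed.
End System.

Theorem lemma2 (n : nat) (chiu : F n) (chik : nat -> 'I_n.+2 -> F n)
    (chip0 chip1 : F n) :
  AB chiu -> (forall k a, a != ord0 -> AB (chik k a)) -> AB chip0 -> AB chip1 ->
  (exists K : nat, forall k a, (K <= k)%N -> a != ord0 -> inJ (chik k a)) ->
  ( ( eqJ (fadd (D ord0 chiu)
                (fscal 2 (fsumN (fun a => D a (fmul (uf a (unitmi ord0)) chip1)))))
          ((@fzero n))
    /\ (forall (k : nat) (a : 'I_n.+2), a != ord0 ->
          eqJ (fadd (D ord0 (chik k a))
              (fadd (if k == 0%N then D a chiu else (@fzero n))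
              (fadd (if k is k'.+1 then chik k' a else (@fzero n))
                    (fscal 2
                      (fadd (if k == 0%N then
                               D a (fmul (fsumN (fun b => uf b (unitmi b))) chip1)
                             else (@fzero n))
                      (fadd (if k == 1%N then
                               fopp (fmul (uf ord0 (unitmi a)) chip1)
                             else (@fzero n))
                            (if k == 0%N then
                               fsumN (fun b => D b (fmul (uf b (unitmi a)) chip1))
                             else (@fzero n))))))))
              ((@fzero n)))
    /\ eqJ (fsub (D ord0 chip0) (lap' chip1)) ((@fzero n))
    /\ eqJ (fadd (D ord0 chip1) chip0) ((@fzero n)) )
  <->
  ( (forall a : 'I_n.+2, a != ord0 ->
        eqJ (chik 0%N a) (fscal 2 (fmul (uf ord0 (unitmi a)) chip1)))
    /\ (forall (k : nat) (a : 'I_n.+2), (1 <= k)%N -> a != ord0 ->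
        eqJ (chik k a) ((@fzero n)))
    /\ eqJ chip0 (fopp (D ord0 chip1))
    /\ eqJ (lap chip1) ((@fzero n))
    /\ (forall a : 'I_n.+2, a != ord0 ->
        eqJ (fsumM (fun mu =>
               fsub (fmul (uf mu (unitmi ord0)) (D mu (D a chip1)))
                    (fmul (uf mu (unitmi a)) (D mu (D ord0 chip1)))))
            ((@fzero n)))
    /\ eqJ (D ord0 chiu)
           (fscal (-2) (fsumN (fun a => D a (fmul (uf a (unitmi ord0)) chip1))))
    /\ (forall a : 'I_n.+2, a != ord0 ->
        eqJ (D a chiu)
            (fscal (-2)
               (fadd (fsumM (fun mu => fmul (uf mu (unitmi a)) (D mu chip1)))
                     (D a (fmul (fsumN (fun b => uf b (unitmi b))) chip1)))))) ).
Proof.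
move=> Hu Hk Hp0 Hp1 HK; split.
- exact: system_solution Hu Hk Hp0 Hp1 HK.
- exact: solution_system Hk Hp0 Hp1.
Qed.
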